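(* Let $Q$ be a finite connected quandle and $\alpha$ a congruence of $Q$. If $Q/\alpha$ is simply connected, then $\alpha=\mathcal{O}_{\mathrm{Dis}_\alpha}$ and $\mathrm{Dis}_\alpha=\mathrm{Dis}^\alpha$.
   Context: A quandle is a set $Q$ with a binary operation $*$ such that every left translation $L_x:y\mapsto x*y$ is bijective, $x*(y*z)=(x*y)*(x*z)$ and $x*x=x$; left division is $x\backslash y=L_x^{-1}(y)$. $\mathrm{LMlt}(Q)=\langle L_x:x\in Q\rangle$; $Q$ is connected if it is transitive. A congruence is an equivalence relation compatible with $*$ and $\backslash$. For a congruence $\alpha$: $\mathrm{Dis}_\alpha=\langle L_xL_y^{-1}: x\,\alpha\,y\rangle$; $\mathrm{Dis}(Q)=\langle L_xL_y^{-1}:x,y\in Q\rangle$; $\mathrm{LMlt}^\alpha$ is the kernel of the surjective group homomorphism $\mathrm{LMlt}(Q)\to\mathrm{LMlt}(Q/\alpha)$, $L_x\mapsto L_{[x]_\alpha}$; $\mathrm{Dis}^\alpha=\mathrm{LMlt}^\alpha\cap\mathrm{Dis}(Q)$. For a normal subgroup $N$ of $\mathrm{LMlt}(Q)$, $\mathcal{O}_N=\{(x,h(x)):x\in Q,h\in N\}$ (a congruence). For a set $S$, a quandle cocycle with values in $\mathrm{Sym}_S$ is $\theta:Q\times Q\to\mathrm{Sym}_S$ with $\theta_{x*y,x*z}\theta_{x,z}=\theta_{x,y*z}\theta_{y,z}$, $\theta_{x,x}=1$; it is cohomologous to the trivial cocycle if $\theta_{x,y}=\gamma_{x*y}\gamma_y^{-1}$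 for some $\gamma:Q\to\mathrm{Sym}_S$. A quandle is simply connected if it is connected and for every set $S$ every such cocycle is cohomologous to the trivial cocycle. *)

From mathcomp Require Import all_boot all_fingroup.
Set Implicit Arguments. Unset Strict Implicit. Unset Printing Implicit Defensive.

Section Magma.
Variables (T : finType) (op : T -> T -> T).

Definition is_quandle : Prop :=
  [/\ forall x, bijective (op x),
      forall x y z, op x (op y z) = op (op x y) (op x z)
    & forall x, op x x = x].

(* Left translation L_x as a permutation (identity fallback if op x is not
   injective, which never happens for a quandle). *)
Definition Lperm (x : T) : {perm T} := insubd (1%g : {perm T}) [ffun y => op x y].

Definition ldiv (x y : T) : T := (Lperm x)^-1%g y.

Definition LMlt : {set {perm T}} := <<[set Lperm x | x in T]>>%g.

Definition connected : Prop := forall x y : T, exists2 g, g \in LMlt & g x = y.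

(* Dis(Q) = < L_x L_y^{-1} >; in mathcomp (s * t) z = t (s z), so the
   function composition L_x o L_y^{-1} is written (L_y)^-1 * L_x. *)
Definition Dis : {set {perm T}} :=
  <<[set ((Lperm y)^-1 * Lperm x)%g | x in T, y in T]>>%g.

Record Sym (S : Type) := MkSym {
  sfun : S -> S; sinv : S -> S;
  sfunK : cancel sfun sinv; sinvK : cancel sinv sfun }.

Definition is_cocycle (S : Type) (theta : T -> T -> Sym S) : Prop :=
  (forall x y z s,
     sfun (theta (op x y) (op x z)) (sfun (theta x z) s)
     = sfun (theta x (op y z)) (sfun (theta y z) s))
  /\ (forall x s, sfun (theta x x) s = s).

Definition cohomologous_trivial (S : Type) (theta : T -> T -> Sym S) : Prop :=
  exists gamma : T -> Sym S, forall x y s,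
    sfun (theta x y) s = sfun (gamma (op x y)) (sinv (gamma y) s).

Definition simply_connected : Prop :=
  connected /\
  forall (S : Type) (theta : T -> T -> Sym S),
    is_cocycle theta -> cohomologous_trivial theta.

Definition orbrel (N : {set {perm T}}) (x y : T) : bool :=
  [exists h in N, h x == y].

End Magma.

Section Congruence.
Variables (Q : finType) (op : Q -> Q -> Q) (alpha : rel Q).

Definition congruence : Prop :=
  [/\ forall x, alpha x x,
      forall x y, alpha x y -> alpha y x,
      forall x y z, alpha x y -> alpha y z -> alpha x z,
      forall x x' y y', alpha x x' -> alpha y y' -> alpha (op x y) (op x' y')
    & forall x x' y y', alpha x x' -> alpha y y' ->
        alpha (ldiv op x y) (ldiv op x' y')].

(* The quotient Q/alpha: the set of alpha-classes. *)
Definition aclass (x : Q) : {set Q} := [set y | alpha x y].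

Definition qT := {A : {set Q} | [exists x, A == aclass x]}.

Lemma qpi_proof (x : Q) : [exists y, aclass x == aclass y].
Proof. by apply/existsP; exists x. Qed.

Definition qpi (x : Q) : qT := exist _ (aclass x) (qpi_proof x).

Definition qrep (A : qT) : Q := xchoose (existsP (valP A)).

Definition qop (A B : qT) : qT := qpi (op (qrep A) (qrep B)).

Definition Dis_a : {set {perm Q}} :=
  <<[set ((Lperm op y)^-1 * Lperm op x)%g | x in Q, y in Q & alpha x y]>>%g.

(* LMlt^alpha: kernel of LMlt(Q) -> LMlt(Q/alpha), L_x |-> L_[x], i.e. the
   elements of LMlt(Q) inducing the identity on Q/alpha. *)
Definition LMlt_up : {set {perm Q}} :=
  [set h in LMlt op | [forall x, alpha (h x) x]].

Definition Dis_up : {set {perm Q}} := (LMlt_up :&: Dis op)%g.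

End Congruence.

Arguments aclass {Q} alpha x.
Arguments qpi {Q} alpha x.
Arguments qrep {Q} alpha A.
Arguments qop {Q} op alpha A B.
Arguments congruence {Q} op alpha.
Arguments Dis_a {Q} op alpha.
Arguments LMlt_up {Q} op alpha.
Arguments Dis_up {Q} op alpha.

From Pilot Require Import Defs.
From mathcomp Require Import all_boot all_fingroup.
Set Implicit Arguments. Unset Strict Implicit. Unset Printing Implicit Defensive.

(* Write N = Dis_alpha.  Since L_{z*x} = L_z L_x L_z^-1 and N is generated by the
   L_x L_y^-1 with x alpha y, the map lambda : [x] |-> L_x N from Q/alpha to LMlt(Q)/N is well
   defined and turns * into conjugation, so theta_{a,b}(k) = k lambda_b^-1 lambda_a is a
   cocycle of Q/alpha with values in Sym(LMlt(Q)/N).  Simple connectedness gives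
   theta_{a,b} = gamma_{a*b} gamma_b^-1, and checking on generators L_x L_y^-1 shows
   that for h in Dis(Q) right multiplication by hN is gamma_{[h d]} gamma_{[d]}^-1 for
   every d.  Hence an element of Dis(Q) mapping some d into its own alpha-class lies
   in N: this is Dis^alpha <= Dis_alpha and, Dis(Q) being transitive on the connected
   quandle Q, also alpha <= O_N.  The reverse inclusions hold for any congruence. *)

Local Open Scope group_scope.

Lemma gen_ind (gT : finGroupType) (A : {set gT}) (P : gT -> Prop) :
  P 1 -> {in <<A>> &, forall x y, P x -> P y -> P (x * y)} ->
  {in A, forall x, P x} -> {in <<A>>, forall x, P x}.
Proof.
move=> P1 PM PA x /gen_prodgP[n [c Ac ->]].
suff [] : \prod_i c i \in <<A>> /\ P (\prod_i c i) by [].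
elim: n c Ac => [|n IHn] c Ac; first by rewrite big_ord0 group1.
rewrite big_ord_recr /=; have [Ax Px] := IHn _ (fun i => Ac (widen_ord (leqnSn n) i)).
have Ay := mem_gen (Ac ord_max).
by split; [rewrite groupM | apply: PM => //; apply: PA].
Qed.

Section ConjugationCocycle.
Variables (T : finType) (op : T -> T -> T) (G : finGroupType) (lambda : T -> G).
Hypothesis lambda_op : forall a b, lambda (op a b) = lambda b ^ lambda a.

Lemma conj_cocycleK a b :
  cancel (fun k => k * (lambda b)^-1 * lambda a) (fun k => k * (lambda a)^-1 * lambda b).
Proof. by move=> k; rewrite mulgK mulgKV. Qed.

Lemma conj_cocycleKV a b :
  cancel (fun k => k * (lambda a)^-1 * lambda b) (fun k => k * (lambda b)^-1 * lambda a).
Proof. by move=> k; rewrite mulgK mulgKV. Qed.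

Definition conj_cocycle a b : Defs.Sym G :=
  MkSym (conj_cocycleK a b) (conj_cocycleKV a b).

Lemma conj_cocycleE a b k : sfun (conj_cocycle a b) k = k * (lambda b)^-1 * lambda a.
Proof. by []. Qed.

Lemma is_cocycle_conj : is_cocycle op conj_cocycle.
Proof.
split=> [a b c k | a k]; last by rewrite /= mulgKV.
by rewrite /= !lambda_op !conjgE !invMg !invgK !mulgA !mulgK.
Qed.

End ConjugationCocycle.

Section Quandle.
Variables (Q : finType) (op : Q -> Q -> Q).
Hypothesis quandleQ : is_quandle op.

Lemma op_inj x : injective (op x).
Proof. by case: quandleQ => bij _ _; apply: bij_inj. Qed.

Lemma LpermE x y : Lperm op x y = op x y.
Proof.
have injL : injectiveb [ffun y => op x y].
  by apply/injectiveP=> u v; rewrite !ffunE; apply: op_inj.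
by rewrite /Lperm [@fun_of_perm]unlock insubdK // ffunE.
Qed.

Lemma ldivK x : cancel (ldiv op x) (op x).
Proof. by move=> y; rewrite /ldiv -LpermE permKV. Qed.

Lemma opK x : cancel (op x) (ldiv op x).
Proof. by move=> y; rewrite /ldiv -LpermE permK. Qed.

Lemma LpermJ x z : Lperm op x ^ Lperm op z = Lperm op (op z x).
Proof.
case: quandleQ => _ opD _; apply/permP=> w.
by rewrite conjgE !permM !LpermE -[(Lperm op z)^-1 w]/(ldiv op z w) opD ldivK.
Qed.

Lemma Lperm_LMlt x : Lperm op x \in LMlt op.
Proof. by apply: mem_gen; apply: imset_f. Qed.

Lemma Dis_sub_LMlt : Dis op \subset LMlt op.
Proof.
rewrite gen_subG; apply/subsetP=> _ /imset2P[x y _ _ ->].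
by rewrite groupM ?groupV ?Lperm_LMlt.
Qed.

(* [L_z w = (L_z L_w^-1) w] because [w] is a fixed point of [L_w]. *)
Lemma LMlt_Dis_orbit :
  {in LMlt op, forall (g : {perm Q}) w, exists2 h, h \in Dis op & h w = g w}.
Proof.
apply: gen_ind => [w | g1 g2 _ _ IH1 IH2 w | _ /imsetP[z _ ->] w].
- by exists 1; rewrite ?group1.
- have [h1 Dh1 h1w] := IH1 w; have [h2 Dh2 h2w] := IH2 (g1 w).
  by exists (h1 * h2); rewrite ?groupM // !permM h1w h2w.
- exists ((Lperm op w)^-1 * Lperm op z); first exact/mem_gen/imset2_f.
  case: quandleQ => _ _ opI.
  by rewrite permM -[(Lperm op w)^-1 w]/(ldiv op w w) -{2}(opI w) opK.
Qed.

Lemma Dis_transitive : connected op -> forall x y, exists2 h, h \in Dis op & h x = y.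
Proof.
move=> connQ x y; have [g LMg <-] := connQ x y.
exact: LMlt_Dis_orbit.
Qed.

End Quandle.

Section Congruence.
Variables (Q : finType) (op : Q -> Q -> Q) (alpha : rel Q).
Hypothesis quandleQ : is_quandle op.
Hypothesis congr_alpha : congruence op alpha.

Local Notation N := (Dis_a op alpha).

Lemma cong_refl x : alpha x x.
Proof. by case: congr_alpha. Qed.

Lemma cong_sym x y : alpha x y -> alpha y x.
Proof. by case: congr_alpha => _ + _ _ _; apply. Qed.

Lemma cong_trans x y z : alpha x y -> alpha y z -> alpha x z.
Proof. by case: congr_alpha => _ _ + _ _; apply. Qed.

Lemma cong_op x x' y y' : alpha x x' -> alpha y y' -> alpha (op x y) (op x' y').
Proof. by case: congr_alpha => _ _ _ + _; apply. Qed.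

Lemma Dis_a_gen x y : alpha x y -> (Lperm op y)^-1 * Lperm op x \in N.
Proof. by move=> xy; apply/mem_gen/imset2P; exists x y; rewrite ?inE. Qed.

Lemma Dis_a_sub_Dis : N \subset Dis op.
Proof. by apply: genS; apply/subsetP=> _ /imset2P[x y _ _ ->]; apply: imset2_f. Qed.

Lemma Dis_a_sub_LMlt : N \subset LMlt op.
Proof. exact: subset_trans Dis_a_sub_Dis (Dis_sub_LMlt op). Qed.

Lemma LMlt_norm_Dis_a : LMlt op \subset 'N(N).
Proof.
rewrite gen_subG; apply/subsetP=> _ /imsetP[z _ ->].
rewrite -sub1set norms_gen // sub1set inE.
apply/subsetP=> _ /imsetP[_ /imset2P[x y _ xy ->] ->].
rewrite conjMg conjVg !LpermJ //; apply/imset2P; exists (op z x) (op z y) => //.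
by move: xy; rewrite !inE; apply: cong_op; apply: cong_refl.
Qed.

Lemma Dis_norm_Dis_a : Dis op \subset 'N(N).
Proof. exact: subset_trans (Dis_sub_LMlt op) LMlt_norm_Dis_a. Qed.

Lemma Dis_a_in_class : {in N, forall (h : {perm Q}) x, alpha (h x) x}.
Proof.
apply: gen_ind => [x | h1 h2 _ _ IH1 IH2 x | _ /imset2P[x y _ + ->]].
- by rewrite perm1 cong_refl.
- by rewrite permM; apply: cong_trans (IH2 _) (IH1 _).
- rewrite inE => xy z; rewrite permM LpermE //.
  by rewrite -{2}(ldivK quandleQ y z) cong_op ?cong_refl.
Qed.

Lemma orbrel_Dis_a x y : orbrel N x y -> alpha x y.
Proof. by case/existsP=> h /andP[Nh /eqP <-]; apply/cong_sym/Dis_a_in_class. Qed.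

Lemma Dis_a_sub_Dis_up : N \subset Dis_up op alpha.
Proof.
apply/subsetP=> h Nh; rewrite !inE (subsetP Dis_a_sub_LMlt) ?(subsetP Dis_a_sub_Dis) //=.
by rewrite andbT; apply/forallP=> x; apply: Dis_a_in_class.
Qed.

Local Notation qpi := (qpi alpha).
Local Notation qop := (qop op alpha).

Lemma qpi_cong x y : alpha x y -> qpi x = qpi y.
Proof.
move=> xy; apply: val_inj; apply/setP=> z; rewrite !inE.
by apply/idP/idP; [apply: cong_trans (cong_sym xy) | apply: cong_trans xy].
Qed.

Lemma qrep_qpi x : alpha (qrep alpha (qpi x)) x.
Proof.
have /eqP/setP/(_ x) := xchooseP (existsP (valP (qpi x))).
by rewrite !inE cong_refl => <-.
Qed.

Lemma qop_qpi x y : qop (qpi x) (qpi y) = qpi (op x y).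
Proof. by apply: qpi_cong; apply: cong_op; apply: qrep_qpi. Qed.

Definition Lcoset x := coset N (Lperm op x).

Lemma Lcoset_cong x y : alpha x y -> Lcoset x = Lcoset y.
Proof.
have LN := subsetP LMlt_norm_Dis_a _ (Lperm_LMlt op _).
move=> xy; apply/eqP; rewrite eq_mulVg1 -morphV // -morphM ?groupV //.
by rewrite /= coset_id // Dis_a_gen // cong_sym.
Qed.

Lemma Lcoset_op x y : Lcoset (op x y) = Lcoset y ^ Lcoset x.
Proof.
have LN := subsetP LMlt_norm_Dis_a _ (Lperm_LMlt op _).
by rewrite /Lcoset -LpermJ // morphJ.
Qed.

End Congruence.

Section Trivialization.
Variables (Q : finType) (op : Q -> Q -> Q) (alpha : rel Q).
Hypothesis quandleQ : is_quandle op.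
Hypothesis congr_alpha : congruence op alpha.

Local Notation N := (Dis_a op alpha).
Local Notation qpi := (qpi alpha).
Local Notation Lcoset := (Lcoset op alpha).

Definition qLcoset (a : qT alpha) := Lcoset (qrep alpha a).

Lemma qLcoset_qpi x : qLcoset (qpi x) = Lcoset x.
Proof. exact: Lcoset_cong quandleQ congr_alpha _ _ (qrep_qpi congr_alpha x). Qed.

Lemma qLcoset_qop a b : qLcoset (qop op alpha a b) = qLcoset b ^ qLcoset a.
Proof. by rewrite /qop qLcoset_qpi Lcoset_op. Qed.

Variable gamma : qT alpha -> Defs.Sym (coset_of N).
Hypothesis gammaP : forall a b k,
  sfun (conj_cocycle qLcoset a b) k = sfun (gamma (qop op alpha a b)) (sinv (gamma b) k).

Local Notation transport x y := (fun k => sfun (gamma (qpi y)) (sinv (gamma (qpi x)) k)).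

Lemma transport_op x e k : transport e (op x e) k = k * (Lcoset e)^-1 * Lcoset x.
Proof. by rewrite -qop_qpi // -gammaP conj_cocycleE !qLcoset_qpi. Qed.

Lemma Dis_coset : {in Dis op, forall h d k, k * coset N h = transport d (h d) k}.
Proof.
have LN := subsetP (LMlt_norm_Dis_a quandleQ congr_alpha).
have DN := subsetP (Dis_norm_Dis_a quandleQ congr_alpha).
apply: gen_ind => [d k | h1 h2 Dh1 Dh2 IH1 IH2 d k | _ /imset2P[x y _ _ ->] d k] /=.
- by rewrite morph1 mulg1 perm1 sinvK.
- by rewrite morphM ?DN // mulgA (IH1 d) (IH2 (h1 d)) sfunK permM.
- have LMx := LN _ (Lperm_LMlt op x); have LMy := LN _ (Lperm_LMlt op y).
  rewrite permM LpermE // morphM ?groupV // morphV //.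
  set e := (Lperm op y)^-1 d; have de : d = op y e by rewrite /e -LpermE // permKV.
  change (k * ((Lcoset y)^-1 * Lcoset x) = transport d (op x e) k).
  have kE : k = transport e (op y e) (k * (Lcoset y)^-1 * Lcoset e).
    by rewrite transport_op mulgK mulgKV.
  by rewrite {2}kE -de sfunK transport_op mulgK mulgA.
Qed.

Lemma Dis_stab_class_in_Dis_a h d : h \in Dis op -> alpha (h d) d -> h \in N.
Proof.
move=> Dh hd; apply: coset_idr; first exact: (subsetP (Dis_norm_Dis_a quandleQ congr_alpha)).
by rewrite -[coset _ h]mul1g (Dis_coset Dh d) (qpi_cong congr_alpha hd) sinvK.
Qed.

End Trivialization.

Theorem proposition3p5 (Q : finType) (op : Q -> Q -> Q) (alpha : rel Q) :
  is_quandle op -> connected op -> congruence op alpha ->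
  simply_connected (qop op alpha) ->
  (forall x y, alpha x y = orbrel (Dis_a op alpha) x y) /\
  Dis_a op alpha = Dis_up op alpha.
Proof.
move=> quandleQ connQ congr_alpha [_ simplyQ].
have [gamma gammaP] := simplyQ _ _ (is_cocycle_conj (qLcoset_qop quandleQ congr_alpha)).
have DisN := Dis_stab_class_in_Dis_a quandleQ congr_alpha gammaP.
split=> [x y | ].
  apply/idP/idP => [xy | ]; last exact: orbrel_Dis_a.
  have [h Dh hx] := Dis_transitive quandleQ connQ x y.
  by apply/existsP; exists h; rewrite hx eqxx andbT (DisN _ x) // hx (cong_sym congr_alpha).
apply/eqP; rewrite eqEsubset Dis_a_sub_Dis_up //=.
apply/subsetP=> h; rewrite !inE => /andP[/andP[_ /forallP hcl] Dh].
have [d _ | Q0] := pickP (@predT Q); first exact: DisN Dh (hcl d).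
by have -> : h = 1 by apply/permP => x; have := Q0 x.
Qed.
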